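(* For each $i\in\{1,2\}$ let $s_i\in\mathbb{S}^1\subset\mathbb{R}^2$, $t_i\ge0$ and $w_i=(s_it_i,0)\in\mathbb{R}^3$. Then \[d_{\mathbb{H}}(w_1,w_2)\simeq|t_1-t_2|+(t_1\wedge t_2)|s_1-s_2|^{1/2},\] with universal implicit constants.
   Context: For $w=(x,y,z)$, $w'=(x',y',z')$, $d_{\mathbb{H}}(w,w')=|x-x'|+|y-y'|+|z-z'+\tfrac12(xy'-x'y)|^{1/2}$. $t_1\wedge t_2=\min\{t_1,t_2\}$. $a\simeq b$ means $C^{-1}b\le a\le Cb$ for a universal constant $C$. *)

From Stdlib Require Import Reals.
Open Scope R_scope.

Definition dH (w w' : R * R * R) : R :=
  let '(x, y, z) := w in
  let '(x', y', z') := w' in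
  Rabs (x - x') + Rabs (y - y') + sqrt (Rabs (z - z' + / 2 * (x * y' - x' * y))).

Definition norm2 (p : R * R) : R := sqrt (fst p ^ 2 + snd p ^ 2).

Definition on_S1 (s : R * R) : Prop := fst s ^ 2 + snd s ^ 2 = 1.

Definition lift (s : R * R) (t : R) : R * R * R := (fst s * t, snd s * t, 0).

(* Let D = |s1 - s2| and k = |det(s1, s2)|. For unit vectors 4 k^2 = D^2 (4 - D^2), so
   k <= D, and k >= D/2 once D <= 1. The horizontal part of d_H is comparable to the
   Euclidean distance sqrt((t1 - t2)^2 + t1 t2 D^2), and its vertical part is exactly
   sqrt(t1 t2 k / 2). For t1 <= t2 the radial term t2 - t1 is at most the Euclidean
   distance, and the angular term t1 sqrt D is at most the Euclidean distance when
   D >= 1 and at most twice the vertical part when D < 1. Conversely, D <= 2 bounds both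
   parts of d_H by the radial plus angular terms. *)

From Stdlib Require Import Reals Lra Psatz.
Open Scope R_scope.

Lemma sqrt_le_of_le_sq (x y : R) : 0 <= y -> x <= y ^ 2 -> sqrt x <= y.
Proof. intros Hy Hxy. rewrite <- (sqrt_pow2 y Hy). now apply sqrt_le_1_alt. Qed.

Lemma le_sqrt_of_sq_le (x y : R) : 0 <= x -> x ^ 2 <= y -> x <= sqrt y.
Proof. intros Hx Hxy. rewrite <- (sqrt_pow2 x Hx). now apply sqrt_le_1_alt. Qed.

Lemma abs_add_abs_bounds (x y : R) :
  sqrt (x ^ 2 + y ^ 2) <= Rabs x + Rabs y <= 2 * sqrt (x ^ 2 + y ^ 2).
Proof.
  pose proof (Rabs_pos x); pose proof (Rabs_pos y).
  rewrite <- (pow2_abs x), <- (pow2_abs y).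
  split.
  - apply sqrt_le_of_le_sq; nra.
  - assert (Rabs x <= sqrt (Rabs x ^ 2 + Rabs y ^ 2)) by (apply le_sqrt_of_sq_le; nra).
    assert (Rabs y <= sqrt (Rabs x ^ 2 + Rabs y ^ 2)) by (apply le_sqrt_of_sq_le; nra).
    lra.
Qed.

Lemma dH_sym (w w' : R * R * R) : dH w w' = dH w' w.
Proof.
  destruct w as [[x y] z], w' as [[x' y'] z']; unfold dH.
  rewrite (Rabs_minus_sym x), (Rabs_minus_sym y).
  replace (z - z' + / 2 * (x * y' - x' * y))
    with (- (z' - z + / 2 * (x' * y - x * y'))) by ring.
  now rewrite Rabs_Ropp.
Qed.

Definition chord (u v : R * R) : R := norm2 (fst u - fst v, snd u - snd v).

Definition cross (u v : R * R) : R := fst u * snd v - snd u * fst v.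

Lemma chord_ge0 (u v : R * R) : 0 <= chord u v.
Proof. apply sqrt_pos. Qed.

Lemma chord_sym (u v : R * R) : chord u v = chord v u.
Proof. unfold chord, norm2; simpl. f_equal; ring. Qed.

Lemma chord_sq (u v : R * R) :
  chord u v ^ 2 = (fst u - fst v) ^ 2 + (snd u - snd v) ^ 2.
Proof.
  unfold chord, norm2; cbn [fst snd].
  apply pow2_sqrt, Rplus_le_le_0_compat; apply pow2_ge_0.
Qed.

(* Lagrange's identity [dot^2 + cross^2 = 1] together with [chord^2 = 2 - 2 dot]. *)
Lemma cross_sq_on_S1 (u v : R * R) : on_S1 u -> on_S1 v ->
  4 * cross u v ^ 2 = chord u v ^ 2 * (4 - chord u v ^ 2).
Proof.
  intros Hu Hv. rewrite chord_sq.
  destruct u as [a b], v as [c d]; unfold on_S1, cross in *; cbn [fst snd] in *.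
  assert (Hlagrange : (a * c + b * d) ^ 2 + (a * d - b * c) ^ 2 = 1).
  { replace 1 with ((a ^ 2 + b ^ 2) * (c ^ 2 + d ^ 2)) by (rewrite Hu, Hv; ring). ring. }
  assert (Hchord : (a - c) ^ 2 + (b - d) ^ 2 = 2 - 2 * (a * c + b * d)).
  { replace 2 with ((a ^ 2 + b ^ 2) + (c ^ 2 + d ^ 2)) at 1 by (rewrite Hu, Hv; ring). ring. }
  rewrite Hchord. nra.
Qed.

Section UnitVectors.

Variables u v : R * R.
Hypotheses (Hu : on_S1 u) (Hv : on_S1 v).

Lemma chord_le_2 : chord u v <= 2.
Proof.
  pose proof (cross_sq_on_S1 u v Hu Hv); pose proof (pow2_ge_0 (cross u v)).
  destruct (Rle_lt_dec (chord u v) 2) as [Hle | Hgt]; [exact Hle |].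
  assert (4 < chord u v ^ 2) by nra.
  assert (chord u v ^ 2 * (4 - chord u v ^ 2) < 0) by (apply Rmult_pos_neg; lra).
  lra.
Qed.

Lemma abs_cross_le_chord : Rabs (cross u v) <= chord u v.
Proof.
  pose proof (cross_sq_on_S1 u v Hu Hv); pose proof (pow2_ge_0 (chord u v)).
  rewrite <- (sqrt_pow2 _ (chord_ge0 u v)), <- sqrt_Rsqr_abs.
  apply sqrt_le_1_alt. rewrite Rsqr_pow2. nra.
Qed.

Lemma chord_le_2_abs_cross : chord u v <= 1 -> chord u v <= 2 * Rabs (cross u v).
Proof.
  intros Hle. pose proof (Rabs_pos (cross u v)).
  apply Rsqr_incr_0_var; [| lra].
  rewrite !Rsqr_pow2, Rpow_mult_distr, pow2_abs.
  replace (2 ^ 2 * cross u v ^ 2) with (4 * cross u v ^ 2) by ring.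
  rewrite (cross_sq_on_S1 u v Hu Hv).
  pose proof (chord_ge0 u v); pose proof (pow2_ge_0 (chord u v)).
  assert (chord u v ^ 2 <= 1) by nra.
  nra.
Qed.

Lemma lift_dist_sq (t1 t2 : R) :
  (fst u * t1 - fst v * t2) ^ 2 + (snd u * t1 - snd v * t2) ^ 2
  = (t1 - t2) ^ 2 + t1 * t2 * chord u v ^ 2.
Proof.
  rewrite chord_sq.
  destruct u as [a b], v as [c d]; unfold on_S1 in Hu, Hv; cbn [fst snd] in *.
  replace ((a * t1 - c * t2) ^ 2 + (b * t1 - d * t2) ^ 2)
    with ((a ^ 2 + b ^ 2) * t1 ^ 2 + (c ^ 2 + d ^ 2) * t2 ^ 2 - 2 * t1 * t2 * (a * c + b * d))
    by ring.
  replace ((a - c) ^ 2 + (b - d) ^ 2)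
    with ((a ^ 2 + b ^ 2) + (c ^ 2 + d ^ 2) - 2 * (a * c + b * d)) by ring.
  rewrite Hu, Hv. ring.
Qed.

End UnitVectors.

Lemma dH_lift (u v : R * R) (t1 t2 : R) : 0 <= t1 -> 0 <= t2 ->
  dH (lift u t1) (lift v t2)
  = Rabs (fst u * t1 - fst v * t2) + Rabs (snd u * t1 - snd v * t2)
    + sqrt (t1 * t2 * Rabs (cross u v) / 2).
Proof.
  intros Ht1 Ht2. unfold dH, lift, cross. f_equal. f_equal.
  replace (0 - 0 + / 2 * (fst u * t1 * (snd v * t2) - fst v * t2 * (snd u * t1)))
    with (t1 * t2 / 2 * (fst u * snd v - snd u * fst v)) by field.
  rewrite Rabs_mult, (Rabs_right (t1 * t2 / 2)) by nra.
  field.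
Qed.

Lemma radial_angular_le_euclid_area (t1 t2 D k : R) :
  0 <= t1 -> t1 <= t2 -> 0 <= D -> (D <= 1 -> D <= 2 * k) ->
  (t2 - t1) + t1 * sqrt D
  <= 2 * (sqrt ((t2 - t1) ^ 2 + t1 * t2 * D ^ 2) + sqrt (t1 * t2 * k / 2)).
Proof.
  intros Ht1 Ht12 HD Hsmall.
  set (N := sqrt ((t2 - t1) ^ 2 + t1 * t2 * D ^ 2)).
  set (r := sqrt D).
  assert (Hr : r ^ 2 = D) by (apply pow2_sqrt; lra).
  assert (Hr0 : 0 <= r) by apply sqrt_pos.
  assert (0 <= t1 * t2) by nra.
  assert (0 <= t1 * t2 * D ^ 2) by (apply Rmult_le_pos; [lra | apply pow2_ge_0]).
  assert (t2 - t1 <= N) by (apply le_sqrt_of_sq_le; lra).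
  assert (0 <= sqrt (t1 * t2 * k / 2)) by apply sqrt_pos.
  destruct (Rle_lt_dec 1 D) as [Hlarge | Hlt].
  - (* [D >= 1]: the angular term is dominated by the Euclidean distance *)
    assert (t1 * r <= N).
    { apply le_sqrt_of_sq_le; [nra |].
      assert (t1 * t1 * D <= t1 * t2 * D ^ 2).
      { apply Rmult_le_compat; nra. }
      pose proof (pow2_ge_0 (t2 - t1)). nra. }
    lra.
  - (* [D < 1]: it is dominated by the area term, since then [D <= 2 k] *)
    assert (t1 * r / 2 <= sqrt (t1 * t2 * k / 2)).
    { apply le_sqrt_of_sq_le; [nra |].
      specialize (Hsmall (Rlt_le _ _ Hlt)).
      assert (t1 * t1 * D <= t1 * t2 * (2 * k)) by (apply Rmult_le_compat; nra).
      nra. }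
    lra.
Qed.

Lemma euclid_area_le_radial_angular (t1 t2 D k : R) :
  0 <= t1 -> t1 <= t2 -> 0 <= D -> D <= 2 -> k <= D ->
  2 * sqrt ((t2 - t1) ^ 2 + t1 * t2 * D ^ 2) + sqrt (t1 * t2 * k / 2)
  <= 4 * ((t2 - t1) + t1 * sqrt D).
Proof.
  intros Ht1 Ht12 HD HD2 HkD.
  set (r := sqrt D).
  assert (Hr : r ^ 2 = D) by (apply pow2_sqrt; lra).
  assert (Hr0 : 0 <= r) by apply sqrt_pos.
  assert (Hr32 : r <= 3 / 2) by nra.
  set (e := t2 - t1). assert (He : 0 <= e) by (unfold e; lra).
  replace t2 with (t1 + e) by (unfold e; ring).
  assert (sqrt (e ^ 2 + t1 * (t1 + e) * D ^ 2) <= 3 / 2 * (e + t1 * r)).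
  { (* uses [r^4 <= 2 r^2] and [r^3 <= 2 sqrt 2 <= 3] *)
    apply sqrt_le_of_le_sq; [nra |]. rewrite <- Hr.
    assert (r ^ 3 <= 3) by nra.
    assert (0 <= t1 * e * r) by (apply Rmult_le_pos; nra).
    nra. }
  assert (sqrt (t1 * (t1 + e) * k / 2) <= e + t1 * r).
  { apply sqrt_le_of_le_sq; [nra |].
    assert (t1 * (t1 + e) * k <= t1 * (t1 + e) * r ^ 2)
      by (rewrite Hr; apply Rmult_le_compat_l; nra).
    assert (0 <= t1 * e * r) by (apply Rmult_le_pos; nra).
    assert (t1 * e * r * r <= t1 * e * r * 4) by (apply Rmult_le_compat_l; lra).
    pose proof (pow2_ge_0 e). pose proof (pow2_ge_0 (t1 * r)). nra. }
  lra.
Qed.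

Lemma dH_lift_comparable_sorted (s1 s2 : R * R) (t1 t2 : R) :
  on_S1 s1 -> on_S1 s2 -> 0 <= t1 -> t1 <= t2 ->
  (t2 - t1) + t1 * sqrt (chord s1 s2) <= 2 * dH (lift s1 t1) (lift s2 t2) /\
  dH (lift s1 t1) (lift s2 t2) <= 4 * ((t2 - t1) + t1 * sqrt (chord s1 s2)).
Proof.
  intros Hs1 Hs2 Ht1 Ht12.
  rewrite dH_lift by lra.
  pose proof (abs_add_abs_bounds (fst s1 * t1 - fst s2 * t2) (snd s1 * t1 - snd s2 * t2))
    as Hl1.
  rewrite lift_dist_sq in Hl1 by assumption.
  replace ((t1 - t2) ^ 2) with ((t2 - t1) ^ 2) in Hl1 by ring.
  pose proof (chord_ge0 s1 s2) as Hchord.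
  pose proof (radial_angular_le_euclid_area t1 t2 (chord s1 s2) (Rabs (cross s1 s2))
    Ht1 Ht12 Hchord (chord_le_2_abs_cross s1 s2 Hs1 Hs2)).
  pose proof (euclid_area_le_radial_angular t1 t2 (chord s1 s2) (Rabs (cross s1 s2))
    Ht1 Ht12 Hchord (chord_le_2 s1 s2 Hs1 Hs2) (abs_cross_le_chord s1 s2 Hs1 Hs2)).
  split; lra.
Qed.

Theorem lemma3p3 :
  exists C : R, 0 < C /\
    forall (s1 s2 : R * R) (t1 t2 : R),
      on_S1 s1 -> on_S1 s2 -> 0 <= t1 -> 0 <= t2 ->
      let b := Rabs (t1 - t2)
               + Rmin t1 t2 * sqrt (norm2 (fst s1 - fst s2, snd s1 - snd s2)) in
      / C * b <= dH (lift s1 t1) (lift s2 t2) /\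
      dH (lift s1 t1) (lift s2 t2) <= C * b.
Proof.
  exists 4. split; [lra |].
  intros s1 s2 t1 t2 Hs1 Hs2 Ht1 Ht2 b.
  change (norm2 (fst s1 - fst s2, snd s1 - snd s2)) with (chord s1 s2) in b.
  unfold b.
  destruct (Rle_dec t1 t2) as [Ht12 | Ht21].
  - rewrite Rmin_left, Rabs_minus_sym, Rabs_right by lra.
    destruct (dH_lift_comparable_sorted s1 s2 t1 t2) as [Hlow Hup]; auto.
    split; lra.
  - rewrite Rmin_right, Rabs_right, dH_sym, chord_sym by lra.
    destruct (dH_lift_comparable_sorted s2 s1 t2 t1) as [Hlow Hup]; auto; [lra |].
    split; lra.
Qed.
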